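(* Let $S$ be a semibounded relation in $\mathfrak H$ with lower bound $\gamma\in\mathbb R$, let $c\le\gamma$, let $Q_c$ be a representing map for $\mathfrak t(S)-c$ and $J_c$ its companion relation. Then: (1) $\mathrm{mul}\,J_c=\mathrm{ran}\,(S-c)\cap\mathrm{mul}\,S^*$. (2) $\psi'\in\mathrm{mul}\,J_c^{**}$ if and only if there is a sequence $\{\varphi_n,\varphi_n'\}\in S$ with $\varphi_n'-c\varphi_n\to\psi'$ and $(\varphi_n'-c\varphi_n,\varphi_n)\to0$. (3) $\psi'\in\mathrm{dom}\,J_c^*$ if and only if there is $C_{\psi'}<\infty$ such that $|(\varphi',\psi')|^2\le C_{\psi'}(\varphi',\varphi)$ for all $\{\varphi,\varphi'\}\in S-c$.
   Context: Linear relations are linear subspaces $T\subset\mathfrak H\times\mathfrak K$ with $\mathrm{dom}\,T$, $\mathrm{ran}\,T$, $\mathrm{mul}\,T=\{g:\{0,g\}\in T\}$; $T^*=\{\{h,k\}\in\mathfrak K\times\mathfrak H:(k,f)=(h,g)\ \forall\{f,g\}\in T\}$; $T^{**}$ is the closure; $S-c=\{\{f,g-cf\}:\{f,g\}\in S\}$. $S$ is semibounded with lower bound $\gamma$ if $\gamma$ is the supremum of all $c$ with $(\varphi',\varphi)\ge c\|\varphi\|^2$ for all $\{\varphi,\varphi'\}\in S$. The form $\mathfrak t(S)[\varphi,\psi]=(\varphi',\psi)$ on $\mathrm{dom}\,S$. A representing map for $\mathfrak t(S)-c$ is a linear operator $Q_c$ from $\mathfrak H$ to a Hilbert space $\mathfrak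 K_c$ with $\mathrm{dom}\,Q_c=\mathrm{dom}\,S$ and $\mathfrak t(S)[\varphi,\psi]=c(\varphi,\psi)+(Q_c\varphi,Q_c\psi)$. Its companion relation is $J_c=\{\{Q_c\varphi,\varphi'-c\varphi\}:\{\varphi,\varphi'\}\in S\}\subset\mathfrak K_c\times\mathfrak H$. *)

From HB Require Import structures.
From mathcomp Require Import all_boot all_order all_algebra.
From mathcomp Require Import boolp classical_sets reals.
From mathcomp Require Import complex.
Set Implicit Arguments. Unset Strict Implicit. Unset Printing Implicit Defensive.
Import Order.TTheory GRing.Theory Num.Theory.
Local Open Scope ring_scope.
Local Open Scope classical_set_scope.

Section Hilbert.
Variable R : realType.
Local Notation C := R[i].

Definition hnorm (V : lmodType C) (ip : V -> V -> C) (x : V) : R :=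
  Num.sqrt (complex.Re (ip x x)).

Definition hcvg (V : lmodType C) (ip : V -> V -> C) (u : nat -> V) (l : V) :=
  forall eps : R, 0 < eps -> exists N : nat, forall n, (N <= n)%N ->
    hnorm ip (u n - l) < eps.

Definition hcauchy (V : lmodType C) (ip : V -> V -> C) (u : nat -> V) :=
  forall eps : R, 0 < eps -> exists N : nat, forall n m, (N <= n)%N -> (N <= m)%N ->
    hnorm ip (u n - u m) < eps.

Definition ccvg (u : nat -> C) (l : C) :=
  forall eps : R, 0 < eps -> exists N : nat, forall n, (N <= n)%N ->
    `|u n - l| < eps%:C%C.

Record is_hilbert (V : lmodType C) (ip : V -> V -> C) : Prop := {
  ip_conj : forall x y, ip y x = (ip x y)^*;
  ip_linear : forall (a : C) x y z, ip (a *: x + y) z = a * ip x z + ip y z;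
  ip_ge0 : forall x, 0 <= ip x x;
  ip_eq0 : forall x, ip x x = 0 -> x = 0;
  ip_complete : forall u, hcauchy ip u -> exists l, hcvg ip u l
}.

Definition linrel (H K : lmodType C) (T : set (H * K)) : Prop :=
  T (0, 0) /\ forall (a : C) f g f' g', T (f, g) -> T (f', g') ->
    T (a *: f + f', a *: g + g').

Definition lr_dom (H K : Type) (T : set (H * K)) : set H :=
  [set f | exists g, T (f, g)].
Definition lr_ran (H K : Type) (T : set (H * K)) : set K :=
  [set g | exists f, T (f, g)].
Definition lr_mul (H K : lmodType C) (T : set (H * K)) : set K :=
  [set g | T (0, g)].

Definition lr_adj (H K : lmodType C) (ipH : H -> H -> C) (ipK : K -> K -> C)
  (T : set (H * K)) : set (K * H) :=
  [set hk | forall f g, T (f, g) -> ipH hk.2 f = ipK hk.1 g].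

Definition lr_shift (H : lmodType C) (S : set (H * H)) (c : R) : set (H * H) :=
  [set fg | exists f g, S (f, g) /\ fg = (f, g - c%:C%C *: f)].

Definition lb_set (H : lmodType C) (ip : H -> H -> C) (S : set (H * H)) : set R :=
  [set c | forall f g, S (f, g) -> c%:C%C * ip f f <= ip g f].

Definition semibounded_lb (H : lmodType C) (ip : H -> H -> C) (S : set (H * H))
  (gamma : R) : Prop :=
  (forall c, lb_set ip S c -> c <= gamma) /\
  (forall b, (forall c, lb_set ip S c -> c <= b) -> gamma <= b).

(* Q (defined on dom S) is a representing map for t(S) - c *)
Definition representing_map (H K : lmodType C) (ipH : H -> H -> C)
  (ipK : K -> K -> C) (S : set (H * H)) (c : R) (Q : H -> K) : Prop :=
  (forall (a : C) x y, lr_dom S x -> lr_dom S y -> Q (a *: x + y) = a *: Q x + Q y) /\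
  (forall f g h, S (f, g) -> lr_dom S h ->
     ipH g h = c%:C%C * ipH f h + ipK (Q f) (Q h)).

Definition companion (H K : lmodType C) (S : set (H * H)) (c : R) (Q : H -> K)
  : set (K * H) :=
  [set kh | exists f g, S (f, g) /\ kh = (Q f, g - c%:C%C *: f)].

End Hilbert.

(* The representing identity gives (phi' - c phi, h) = (Q phi, Q h) for h in dom S,
   in particular (phi' - c phi, phi) = ||Q phi||^2.  Item (1) follows at once.
   For (2), the projection theorem in K x H shows that psi' lies in mul J** exactly
   when {0, psi'} is a limit of elements {Q phi_n, phi_n' - c phi_n} of J, and
   Q phi_n -> 0 means (phi_n' - c phi_n, phi_n) -> 0.  For (3), by the Riesz
   representation theorem psi' lies in dom J* exactly when the functional
   Q phi |-> (phi' - c phi, psi') is bounded, and its bound is the stated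
   inequality. *)

From HB Require Import structures.
From mathcomp Require Import all_boot all_order all_algebra.
From mathcomp Require Import boolp classical_sets reals.
From mathcomp Require Import complex.
From mathcomp Require Import ring lra.
Import Order.TTheory GRing.Theory Num.Theory.
Local Open Scope ring_scope.
Local Open Scope classical_set_scope.
Set Implicit Arguments. Unset Strict Implicit. Unset Printing Implicit Defensive.

Lemma sqrtr_lt (R : rcfType) (a e : R) : 0 < e -> (Num.sqrt a < e) = (a < e ^+ 2).
Proof. by move=> e_gt0; rewrite -ltr_sqrt ?exprn_gt0 // sqrtr_sqr gtr0_norm. Qed.

Section SquaredModulus.
Variable R : realType.
Local Notation C := R[i].

Definition sqnorm (z : C) : R := complex.Re z ^+ 2 + complex.Im z ^+ 2.

Lemma normC_sqnorm z : `|z| ^+ 2 = (sqnorm z)%:C%C.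
Proof. by rewrite -add_Re2_Im2. Qed.

Lemma sqnormE z : z * z^* = (sqnorm z)%:C%C.
Proof. by rewrite -normCK normC_sqnorm. Qed.

Lemma sqnorm0 : sqnorm 0 = 0.
Proof. by rewrite /sqnorm /= expr0n addr0. Qed.

Lemma sqnorm_ge0 z : 0 <= sqnorm z.
Proof. rewrite /sqnorm; nra. Qed.

Lemma sqnorm_eq0 z : sqnorm z = 0 -> z = 0.
Proof.
case: z => a b; rewrite /sqnorm /= => h.
have -> : a = 0 by nra.
by have -> : b = 0 by nra.
Qed.

Lemma sqnorm_le_eq0 z : (forall e : R, 0 < e -> sqnorm z <= e) -> z = 0.
Proof.
move=> le_e; apply: sqnorm_eq0; apply/eqP; rewrite eq_le sqnorm_ge0 andbT.
by apply/ler_addgt0Pr => e e_gt0; rewrite add0r le_e.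
Qed.

Lemma sqnormD z w : sqnorm (z + w) <= 2 * sqnorm z + 2 * sqnorm w.
Proof.
case: z => a b; case: w => c d; rewrite /sqnorm /=.
have := sqr_ge0 (a - c); have := sqr_ge0 (b - d); nra.
Qed.

Lemma sqnormN z : sqnorm (- z) = sqnorm z.
Proof. by case: z => a b; rewrite /sqnorm /= !sqrrN. Qed.

Lemma sqnorm_real (r : R) : sqnorm r%:C%C = r ^+ 2.
Proof. by rewrite /sqnorm /= expr0n /= addr0. Qed.

End SquaredModulus.

Lemma invS_lt_eventually (R : archiRealFieldType) (e : R) :
  0 < e -> exists N, forall n, (N <= n)%N -> (n.+1%:R)^-1 < e.
Proof.
move=> e_gt0; exists (Num.bound e^-1) => n le_Nn.
have /archi_boundP lt_bound : 0 <= e^-1 by rewrite invr_ge0 ltW.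
rewrite invf_plt ?posrE //; apply: (lt_le_trans lt_bound).
by rewrite ler_nat (leq_trans le_Nn).
Qed.

Section InnerProduct.
Variables (R : realType) (V : lmodType R[i]) (ip : V -> V -> R[i]).
Hypothesis hV : is_hilbert ip.

Definition nrm2 (x : V) : R := complex.Re (ip x x).

Lemma ipC x y : ip x y = (ip y x)^*.
Proof. exact: ip_conj. Qed.

Lemma ipDl x y z : ip (x + y) z = ip x z + ip y z.
Proof. by have := ip_linear hV 1 x y z; rewrite scale1r mul1r. Qed.

Lemma ip0l z : ip 0 z = 0.
Proof. by apply: (addrI (ip 0 z)); rewrite -ipDl !addr0. Qed.

Lemma ipZl a x z : ip (a *: x) z = a * ip x z.
Proof. by have := ip_linear hV a x 0 z; rewrite !addr0 ip0l addr0. Qed.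

Lemma ipNl x z : ip (- x) z = - ip x z.
Proof. by rewrite -scaleN1r ipZl mulN1r. Qed.

Lemma ipBl x y z : ip (x - y) z = ip x z - ip y z.
Proof. by rewrite ipDl ipNl. Qed.

Lemma ipDr x y z : ip z (x + y) = ip z x + ip z y.
Proof. by rewrite ipC ipDl rmorphD /= -!ipC. Qed.

Lemma ip0r z : ip z 0 = 0.
Proof. by rewrite ipC ip0l rmorph0. Qed.

Lemma ipZr a x z : ip z (a *: x) = a^* * ip z x.
Proof. by rewrite ipC ipZl rmorphM /= -ipC. Qed.

Lemma ipNr x z : ip z (- x) = - ip z x.
Proof. by rewrite ipC ipNl rmorphN /= -ipC. Qed.

Lemma ipBr x y z : ip z (x - y) = ip z x - ip z y.
Proof. by rewrite ipDr ipNr. Qed.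

Lemma ipxx x : ip x x = (nrm2 x)%:C%C.
Proof. by rewrite /nrm2; have := ger0_Im (ip_ge0 hV x); case: (ip x x) => a b /= ->. Qed.

Lemma nrm2_ge0 x : 0 <= nrm2 x.
Proof. by have := ip_ge0 hV x; rewrite ipxx ler0c. Qed.

Lemma nrm2_eq0 x : nrm2 x = 0 -> x = 0.
Proof. by move=> x0; apply: (ip_eq0 hV); rewrite ipxx x0. Qed.

Lemma nrm2N x : nrm2 (- x) = nrm2 x.
Proof. by rewrite /nrm2 ipNl ipNr opprK. Qed.

Lemma nrm2_distC x y : nrm2 (x - y) = nrm2 (y - x).
Proof. by rewrite -nrm2N opprB. Qed.

Lemma nrm2Z a x : nrm2 (a *: x) = sqnorm a * nrm2 x.
Proof. by apply: complexI; rewrite rmorphM /= -!ipxx ipZl ipZr -sqnormE; ring. Qed.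

Lemma nrm2_parallelogram x y : nrm2 (x - y) + nrm2 (x + y) = 2 * nrm2 x + 2 * nrm2 y.
Proof.
apply: complexI; rewrite !rmorphD !rmorphM /= -!ipxx rmorph_nat.
by rewrite !(ipBl, ipDl, ipBr, ipDr); ring.
Qed.

Lemma nrm2_sub_proj x y : 0 < nrm2 y ->
  nrm2 (x - ((nrm2 y)^-1%:C%C * ip x y) *: y) = nrm2 x - sqnorm (ip x y) / nrm2 y.
Proof.
move=> y_gt0; apply: complexI; rewrite -ipxx rmorphB rmorphM /= -ipxx -sqnormE.
have conjR (r : R) : r%:C%C^* = r%:C%C by apply/eqP; rewrite eq_complex /= oppr0 !eqxx.
rewrite ipBl !ipBr !ipZl !ipZr rmorphM /= conjR [ip y x]ipC (ipxx y).
rewrite rmorphV ?unitfE ?gt_eqF //.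
by field; rewrite eq_complex /= negb_and gt_eqF.
Qed.

Lemma cauchy_schwarz x y : sqnorm (ip x y) <= nrm2 x * nrm2 y.
Proof.
have [y0|y_neq0] := eqVneq (nrm2 y) 0.
  by rewrite y0 mulr0 (nrm2_eq0 y0) ip0r sqnorm0.
have y_gt0 : 0 < nrm2 y by rewrite lt0r y_neq0 nrm2_ge0.
have := nrm2_ge0 (x - ((nrm2 y)^-1%:C%C * ip x y) *: y).
by rewrite nrm2_sub_proj // subr_ge0 ler_pdivrMr.
Qed.

Lemma hcvg_nrm2P u l : hcvg ip u l <->
  forall e, 0 < e -> exists N, forall n, (N <= n)%N -> nrm2 (u n - l) < e.
Proof.
split=> cvg_u e e_gt0.
  have /(_ (Num.sqrt e)) := cvg_u; rewrite sqrtr_gt0 => /(_ e_gt0) [N leN].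
  by exists N => n /leN; rewrite /hnorm sqrtr_lt ?sqrtr_gt0 // sqr_sqrtr ?ltW.
have [N leN] := cvg_u (e ^+ 2) (exprn_gt0 _ e_gt0).
by exists N => n /leN; rewrite /hnorm sqrtr_lt.
Qed.

Lemma hcauchy_nrm2P u : hcauchy ip u <->
  forall e, 0 < e -> exists N, forall n m, (N <= n)%N -> (N <= m)%N ->
    nrm2 (u n - u m) < e.
Proof.
split=> cau_u e e_gt0.
  have /(_ (Num.sqrt e)) := cau_u; rewrite sqrtr_gt0 => /(_ e_gt0) [N leN].
  exists N => n m len lem; have := leN n m len lem.
  by rewrite /hnorm sqrtr_lt ?sqrtr_gt0 // sqr_sqrtr ?ltW.
have [N leN] := cau_u (e ^+ 2) (exprn_gt0 _ e_gt0).
by exists N => n m len lem; rewrite /hnorm sqrtr_lt ?leN.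
Qed.

Lemma hcvg0_nrm2P u : hcvg ip u 0 <-> ccvg (fun n => (nrm2 (u n))%:C%C) 0.
Proof.
rewrite hcvg_nrm2P; split=> cvg_u e /cvg_u [N leN]; exists N => n /leN;
  by rewrite !subr0 ger0_norm ?ler0c ?nrm2_ge0 // ltcR.
Qed.

Lemma hcvg_ip_orth u l y : hcvg ip u l -> (forall n, ip (u n) y = 0) -> ip l y = 0.
Proof.
move=> /hcvg_nrm2P cvg_u uy0; apply: sqnorm_le_eq0 => e e_gt0.
have [y0|y_neq0] := eqVneq (nrm2 y) 0.
  by rewrite (nrm2_eq0 y0) ip0r sqnorm0 ltW.
have y_gt0 : 0 < nrm2 y by rewrite lt0r y_neq0 nrm2_ge0.
have [N leN] := cvg_u _ (divr_gt0 e_gt0 y_gt0).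
have -> : ip l y = - ip (u N - l) y by rewrite ipBl uy0 sub0r opprK.
rewrite sqnormN (le_trans (cauchy_schwarz _ _)) // -ler_pdivlMr //.
by rewrite nrm2_distC ltW // nrm2_distC leN.
Qed.

End InnerProduct.

Section Projection.
Variables (R : realType) (V : lmodType R[i]) (ip : V -> V -> R[i]).
Hypothesis hV : is_hilbert ip.
Variable M : set V.
Hypotheses (M0 : M 0) (M_lin : forall a x y, M x -> M y -> M (a *: x + y)).
Variable x : V.
Local Notation nrm2 := (nrm2 ip).

Let dist2 : set R := [set r | exists m, M m /\ r = nrm2 (x - m)].
Let d := inf dist2.

Let dist2_lbound : has_lbound dist2.
Proof. by exists 0 => _ [m [_ ->]]; exact: nrm2_ge0. Qed.

Let le_dist m : M m -> d <= nrm2 (x - m).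
Proof. by move=> Mm; apply: (ge_inf dist2_lbound); exists m. Qed.

Let M_scale a y : M y -> M (a *: y).
Proof. by move=> My; have := M_lin a My M0; rewrite addr0. Qed.

Lemma exists_minimizing_seq :
  exists m : nat -> V, forall n, M (m n) /\ nrm2 (x - m n) < d + n.+1%:R^-1.
Proof.
suff approx n : exists m, M m /\ nrm2 (x - m) < d + n.+1%:R^-1.
  by have [m] := choice approx; exists m.
have ne_dist2 : dist2 !=set0 by exists (nrm2 (x - 0)), 0.
have inv_gt0 : 0 < (n.+1%:R : R)^-1 by rewrite invr_gt0 ltr0Sn.
have [_ [m [Mm ->]] lt_m] := inf_adherent inv_gt0 (conj ne_dist2 dist2_lbound).
by exists m.
Qed.

Section MinimizingSequence.
Variable m : nat -> V.
Hypothesis m_min : forall n, M (m n) /\ nrm2 (x - m n) < d + n.+1%:R^-1.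

Lemma minimizing_dist i j : nrm2 (m i - m j) <= 2 * i.+1%:R^-1 + 2 * j.+1%:R^-1.
Proof.
(* The midpoint of [m i] and [m j] lies in [M], so it is not closer to [x] than [d];
   the parallelogram law turns this into a bound on [m i - m j]. *)
pose half : R[i] := (2^-1 : R)%:C%C.
have M_mid : M (half *: m i + half *: m j).
  by apply: M_lin; [exact: (m_min i).1 | exact/M_scale/(m_min j).1].
have mid : x - (half *: m i + half *: m j) = half *: ((x - m i) + (x - m j)).
  have halves : 2^-1 + 2^-1 = 1 :> R by field.
  have halfD : half + half = 1 by rewrite -rmorphD /= halves.
  by rewrite scalerDr !scalerBr addrACA -scalerDl halfD scale1r opprD.
have := le_dist M_mid; rewrite mid nrm2Z // sqnorm_real.
have := nrm2_parallelogram hV (x - m i) (x - m j).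
rewrite (_ : x - m i - (x - m j) = m j - m i); last by rewrite opprB addrC addrA subrK.
rewrite nrm2_distC //; have := (m_min i).2; have := (m_min j).2.
set ai := i.+1%:R^-1; set aj := j.+1%:R^-1; set s := nrm2 (_ + _).
have -> : (2^-1 : R) ^+ 2 = 4^-1 by field.
lra.
Qed.

Lemma minimizing_cauchy : hcauchy ip m.
Proof.
apply/hcauchy_nrm2P => e e_gt0.
have e4_gt0 : 0 < e / 4 by rewrite divr_gt0.
have [N ltN] := invS_lt_eventually e4_gt0.
exists N => i j /ltN lt_i /ltN lt_j; have := minimizing_dist i j.
set ai := i.+1%:R^-1 in lt_i *; set aj := j.+1%:R^-1 in lt_j *; lra.
Qed.

Lemma minimizing_ip_bound n y : M y -> sqnorm (ip (x - m n) y) <= nrm2 y * n.+1%:R^-1.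
Proof.
move=> My; have [y0|y_neq0] := eqVneq (nrm2 y) 0.
  by rewrite y0 mul0r (nrm2_eq0 hV y0) ip0r // sqnorm0.
have y_gt0 : 0 < nrm2 y by rewrite lt0r y_neq0 nrm2_ge0.
set b := ip (x - m n) y; set t := ((nrm2 y)^-1%:C%C * b) *: y.
have := le_dist (M_lin ((nrm2 y)^-1%:C%C * b) My (m_min n).1).
rewrite -/t (_ : x - (t + m n) = x - m n - t); last by rewrite opprD addrA addrAC.
rewrite nrm2_sub_proj // -/b; have := (m_min n).2.
rewrite -ler_pdivrMl // mulrC; set a := n.+1%:R^-1; lra.
Qed.

Lemma minimizing_limit_orth p : hcvg ip m p -> forall y, M y -> ip (x - p) y = 0.
Proof.
move=> /hcvg_nrm2P cvg_m y My; apply: sqnorm_le_eq0 => e e_gt0.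
have [y0|y_neq0] := eqVneq (nrm2 y) 0.
  by rewrite (nrm2_eq0 hV y0) ip0r // sqnorm0 ltW.
have y_gt0 : 0 < nrm2 y by rewrite lt0r y_neq0 nrm2_ge0.
have e'_gt0 : 0 < e / (4 * nrm2 y) by rewrite divr_gt0 // mulr_gt0.
have [N1 lt_inv] := invS_lt_eventually e'_gt0.
have [N2 lt_dist] := cvg_m _ e'_gt0.
pose n := maxn N1 N2.
have -> : x - p = (x - m n) + (m n - p) by rewrite addrA subrK.
rewrite ipDl //; apply: le_trans (sqnormD _ _) _.
have := minimizing_ip_bound n My; have := cauchy_schwarz hV (m n - p) y.
have := lt_inv n (leq_maxl _ _); have := lt_dist n (leq_maxr _ _).
rewrite !ltr_pdivlMr ?mulr_gt0 //.
set a := n.+1%:R^-1; set q := nrm2 (m n - p); set N := nrm2 y.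
have := nrm2_ge0 hV (m n - p); nra.
Qed.
End MinimizingSequence.

Theorem projection_theorem : exists (m : nat -> V) (p : V),
  [/\ forall n, M (m n), hcvg ip m p & forall y, M y -> ip (x - p) y = 0].
Proof.
have [m m_min] := exists_minimizing_seq.
have [p cvg_m] := ip_complete hV (minimizing_cauchy m_min).
exists m, p; split=> [n||]; [exact: (m_min n).1 | exact: cvg_m |].
exact: minimizing_limit_orth.
Qed.
End Projection.

Section Riesz.
Variables (R : realType) (V : lmodType R[i]) (ip : V -> V -> R[i]).
Hypothesis hV : is_hilbert ip.
Local Notation nrm2 := (nrm2 ip).
Variables (P : set (V * R[i])) (B : R).
Hypotheses (P0 : P (0, 0))
  (P_lin : forall a y c y' c', P (y, c) -> P (y', c') -> P (a *: y + y', a * c + c'))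
  (P_bounded : forall y c, P (y, c) -> sqnorm c <= B * nrm2 y).

Let P_kernel_lin a y y' : P (y, 0) -> P (y', 0) -> P (a *: y + y', 0).
Proof. by move=> Py Py'; have := P_lin a Py Py'; rewrite mulr0 addr0. Qed.

Lemma bounded_kernel_closed (m : nat -> V) y c :
  (forall n, P (m n, 0)) -> hcvg ip m y -> P (y, c) -> c = 0.
Proof.
move=> Pm /hcvg_nrm2P cvg_m Pyc; apply: sqnorm_le_eq0 => e e_gt0.
have B1_gt0 : 0 < `|B| + 1 by rewrite ltr_wpDl.
have [N ltN] := cvg_m _ (divr_gt0 e_gt0 B1_gt0).
have := P_bounded (P_lin (-1) (Pm N) Pyc).
rewrite mulr0 add0r scaleN1r addrC nrm2_distC // => le_c.
apply: (le_trans le_c); have := ltN N (leqnn N); rewrite ltr_pdivlMr // => lt_e.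
have := nrm2_ge0 hV (m N - y); have := ler_norm B; nra.
Qed.

Theorem riesz_representation : exists k, forall y c, P (y, c) -> ip y k = c.
Proof.
have [[y0 [c0 [Py0 c0_neq0]]]|P_ker] :=
  pselect (exists y c, P (y, c) /\ c != 0); last first.
  exists 0 => y c Pyc; rewrite ip0r //; apply/eqP; rewrite eq_sym.
  by apply: contra_notT P_ker => c_neq0; exists y, c.
have [m [p [Pm cvg_m p_orth]]] := projection_theorem hV P0 P_kernel_lin y0.
(* [r] is the component of [y0] orthogonal to the kernel; it is nonzero because
   the kernel of a bounded functional is closed. *)
pose r := y0 - p.
have r_gt0 : 0 < nrm2 r.
  rewrite lt0r nrm2_ge0 // andbT; apply: contra c0_neq0 => /eqP/(nrm2_eq0 hV)/eqP.
  rewrite subr_eq0 => /eqP y0_p.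
  by apply/eqP/(bounded_kernel_closed Pm _ Py0); rewrite y0_p.
have y0_r : ip y0 r = (nrm2 r)%:C%C.
  have p_r : ip p r = 0.
    by apply: (hcvg_ip_orth hV cvg_m) => n; rewrite ipC // p_orth // conjC0.
  by rewrite -(subrK p y0) ipDl // p_r addr0 -ipxx.
have r_neq0 : (nrm2 r)%:C%C != 0 :> R[i] by rewrite eq_complex /= negb_and gt_eqF.
exists ((c0 / (nrm2 r)%:C%C)^* *: r) => y c Pyc.
have P_ker : P (- (c / c0) *: y0 + y, 0).
  by have := P_lin (- (c / c0)) Py0 Pyc; rewrite mulNr divfK // addNr.
have := p_orth _ P_ker; rewrite -/r ipC // ipDl // ipZl // y0_r.
move=> /eqP; rewrite conjC_eq0 addrC addr_eq0 => /eqP y_r.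
by rewrite ipZr // conjCK y_r; field; apply/andP.
Qed.
End Riesz.

Section Product.
Variables (R : realType) (K H : lmodType R[i]).
Variables (ipK : K -> K -> R[i]) (ipH : H -> H -> R[i]).
Hypotheses (hK : is_hilbert ipK) (hH : is_hilbert ipH).

Definition prod_ip (u v : K * H) : R[i] := ipK u.1 v.1 + ipH u.2 v.2.

Lemma nrm2_prod u : nrm2 prod_ip u = nrm2 ipK u.1 + nrm2 ipH u.2.
Proof. by rewrite /nrm2 /prod_ip -!/(nrm2 _ _) (ipxx hK) (ipxx hH) -rmorphD. Qed.

Lemma hcvg_prodP w l :
  hcvg prod_ip w l <-> hcvg ipK (fst \o w) l.1 /\ hcvg ipH (snd \o w) l.2.
Proof.
rewrite !hcvg_nrm2P; split=> [cvg_w|[cvg1 cvg2]].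
  split=> e /cvg_w [N leN]; exists N => n /leN; rewrite nrm2_prod /=;
    [have := nrm2_ge0 hH ((w n).2 - l.2) | have := nrm2_ge0 hK ((w n).1 - l.1)]; lra.
move=> e e_gt0; have e2_gt0 : 0 < e / 2 by rewrite divr_gt0.
have [N1 le1] := cvg1 _ e2_gt0; have [N2 le2] := cvg2 _ e2_gt0.
exists (maxn N1 N2) => n; rewrite geq_max => /andP[/le1 lt1 /le2 lt2].
by rewrite nrm2_prod /=; lra.
Qed.

Lemma hcauchy_prod w :
  hcauchy prod_ip w -> hcauchy ipK (fst \o w) /\ hcauchy ipH (snd \o w).
Proof.
rewrite !hcauchy_nrm2P => cau_w.
split=> e /cau_w [N leN]; exists N => n m len lem; have := leN n m len lem;
  rewrite nrm2_prod /=;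
  [have := nrm2_ge0 hH ((w n).2 - (w m).2) | have := nrm2_ge0 hK ((w n).1 - (w m).1)]; lra.
Qed.

Lemma prod_ip_hilbert : is_hilbert prod_ip.
Proof.
split.
- by move=> u v; rewrite /prod_ip rmorphD /= -!ipC.
- by move=> a u v w; rewrite /prod_ip /= (ip_linear hK) (ip_linear hH); ring.
- by move=> u; rewrite /prod_ip (ipxx hK) (ipxx hH) -rmorphD ler0c addr_ge0 ?nrm2_ge0.
- move=> [y z] /(congr1 (@complex.Re R)); rewrite /= -/(nrm2 _ _) nrm2_prod /= => yz0.
  have := nrm2_ge0 hK y; have := nrm2_ge0 hH z => z_ge0 y_ge0.
  have y0 : nrm2 ipK y = 0 by lra.
  have z0 : nrm2 ipH z = 0 by lra.
  by rewrite (nrm2_eq0 hK y0) (nrm2_eq0 hH z0).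
- move=> w /hcauchy_prod[/(ip_complete hK)[l1 cvg1] /(ip_complete hH)[l2 cvg2]].
  by exists (l1, l2); apply/hcvg_prodP.
Qed.

End Product.

Section Adjoints.
Variables (R : realType) (K H : lmodType R[i]).
Variables (ipK : K -> K -> R[i]) (ipH : H -> H -> R[i]).
Hypotheses (hK : is_hilbert ipK) (hH : is_hilbert ipH).
Variable T : set (K * H).
Hypothesis hT : linrel T.
Local Notation ipP := (prod_ip ipK ipH).

Lemma adj_orth h k : lr_adj ipK ipH T (h, k) -> forall w, T w -> ipP w (- k, h) = 0.
Proof.
move=> Thk [y z] /Thk /= k_y; rewrite /prod_ip /= ipNr // [ipK y k]ipC // k_y.
by rewrite -ipC // addNr.
Qed.

Lemma mul_adj_adjP psi :
  lr_mul (lr_adj ipH ipK (lr_adj ipK ipH T)) psi <->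
  exists w : nat -> K * H, (forall n, T (w n)) /\ hcvg ipP w (0, psi).
Proof.
have hP := prod_ip_hilbert hK hH.
split=> [psi_mul|[w [Tw cvg_w]] h k /adj_orth Thk /=]; last first.
  have := hcvg_ip_orth hP cvg_w (fun n => Thk _ (Tw n)).
  by rewrite /prod_ip /= !(ip0l hK) add0r.
have T_lin a (u v : K * H) : T u -> T v -> T (a *: u + v).
  by case: u v => [y z] [y' z']; exact: (proj2 hT).
have [w [p [Tw cvg_w p_orth]]] := projection_theorem hP (proj1 hT) T_lin (0, psi).
exists w; split=> //; suff -> : (0, psi) = p by [].
(* [q] is orthogonal to [T], so its flip lies in [T^*] and is annihilated by
   [psi]: [q] is orthogonal to [(0, psi)] as well as to the limit [p]. *)
set q := (0, psi) - p in p_orth *.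
have q_adj : lr_adj ipK ipH T (q.2, - q.1).
  move=> y z /p_orth /eqP; rewrite /prod_ip addr_eq0 => /eqP /= q_yz.
  by rewrite (ipNl hK) q_yz opprK.
have psi_q : ipH psi q.2 = 0 by rewrite (psi_mul _ _ q_adj) (ip0l hK).
have p_q : ipP p q = 0.
  by apply: (hcvg_ip_orth hP cvg_w) => n; rewrite (ipC hP) p_orth // conjC0.
have x_q : ipP (0, psi) q = 0 by rewrite /prod_ip /= (ip0l hK) psi_q addr0.
apply/eqP; rewrite -subr_eq0; apply/eqP/(nrm2_eq0 hP).
by rewrite /nrm2 (ipBl hP) -/q x_q p_q subr0.
Qed.

Lemma dom_adjP psi :
  lr_dom (lr_adj ipK ipH T) psi <->
  exists B, forall y z, T (y, z) -> sqnorm (ipH z psi) <= B * nrm2 ipK y.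
Proof.
split=> [[k Tk]|[B bound]].
  exists (nrm2 ipK k) => y z /Tk /= k_y.
  by rewrite ipC // -k_y -ipC // mulrC cauchy_schwarz.
pose P : set (K * R[i]) := [set yc | exists z, T (yc.1, z) /\ yc.2 = ipH z psi].
have P0 : P (0, 0) by exists 0; rewrite (ip0l hH); split=> //; exact: (proj1 hT).
have P_lin a y c y' c' : P (y, c) -> P (y', c') -> P (a *: y + y', a * c + c').
  move=> [z [Tyz /= ->]] [z' [Tyz' /= ->]]; exists (a *: z + z').
  by rewrite (ip_linear hH); split=> //; exact: (proj2 hT).
have P_bounded y c : P (y, c) -> sqnorm c <= B * nrm2 ipK y.
  by move=> [z [Tyz /= ->]]; exact: bound.
have [k Pk] := riesz_representation hK P0 P_lin P_bounded.
exists k => y z Tyz /=; rewrite ipC // (Pk y (ipH z psi)) -?ipC //.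
by exists z.
Qed.
End Adjoints.

Section Companion.
Variables (R : realType) (H K : lmodType R[i]).
Variables (ipH : H -> H -> R[i]) (ipK : K -> K -> R[i]).
Hypotheses (hH : is_hilbert ipH) (hK : is_hilbert ipK).
Variables (S : set (H * H)) (c : R) (Q : H -> K).
Hypotheses (hS : linrel S) (hQ : representing_map ipH ipK S c Q).
Local Notation J := (companion S c Q).

Lemma companion_ip f g h :
  S (f, g) -> lr_dom S h -> ipH (g - c%:C%C *: f) h = ipK (Q f) (Q h).
Proof.
move=> Sfg Sh.
by rewrite (ipBl hH) (ipZl hH) (proj2 hQ _ _ _ Sfg Sh) addrAC subrr add0r.
Qed.

Lemma companion_nrm2 f g : S (f, g) -> ipH (g - c%:C%C *: f) f = (nrm2 ipK (Q f))%:C%C.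
Proof. by move=> Sfg; rewrite (companion_ip Sfg) -?(ipxx hK) //; exists g. Qed.

Lemma representing_map0 : Q 0 = 0.
Proof.
have S0 : lr_dom S 0 by exists 0; exact: (proj1 hS).
have := proj1 hQ 1 0 0 S0 S0; rewrite !scale1r addr0 => Q00.
by apply: (addrI (Q 0)); rewrite -Q00 addr0.
Qed.

Lemma scale_shiftD (V : lmodType R[i]) (a k : R[i]) (f g f' g' : V) :
  a *: (g - k *: f) + (g' - k *: f') = a *: g + g' - k *: (a *: f + f').
Proof. by rewrite scalerBr (scalerDr k) !scalerA mulrC opprD addrACA. Qed.

Lemma companion_linrel : linrel J.
Proof.
split.
  by exists 0, 0; rewrite representing_map0 scaler0 subr0; split=> //; exact: (proj1 hS).
move=> a _ _ _ _ [f [g [Sfg [-> ->]]]] [f' [g' [Sfg' [-> ->]]]].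
exists (a *: f + f'), (a *: g + g'); split; first exact: (proj2 hS).
rewrite (proj1 hQ); [|by exists g|by exists g']; congr (_, _).
exact: scale_shiftD.
Qed.

Lemma mul_companion : lr_mul J = lr_ran (lr_shift S c) `&` lr_mul (lr_adj ipH ipH S).
Proof.
apply/seteqP; split=> psi.
  move=> [f [g [Sfg [Qf0 ->]]]]; split; first by exists f, f, g.
  move=> h k Shk /=; rewrite (ip0l hH) companion_ip -?Qf0 ?(ip0l hK) //.
  by exists k.
move=> [[_ [f [g [Sfg [_ ->]]]]] /(_ f g Sfg)]; rewrite /= (ip0l hH) companion_nrm2 //.
move=> /(congr1 (@complex.Re R)) /= /(nrm2_eq0 hK) Qf0.
by exists f, g; rewrite Qf0.
Qed.

Lemma mul_companion_closureP psi :
  lr_mul (lr_adj ipH ipK (lr_adj ipK ipH J)) psi <->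
  exists u : nat -> H * H, (forall n, S (u n)) /\
    hcvg ipH (fun n => (u n).2 - c%:C%C *: (u n).1) psi /\
    ccvg (fun n => ipH ((u n).2 - c%:C%C *: (u n).1) (u n).1) 0.
Proof.
pose Ju (u : nat -> H * H) n := (Q (u n).1, (u n).2 - c%:C%C *: (u n).1).
have ccvgE u : (forall n, S (u n)) ->
    (fun n => ipH ((u n).2 - c%:C%C *: (u n).1) (u n).1) =
    (fun n => (nrm2 ipK (Ju u n).1)%:C%C).
  move=> Su; apply: funext => n; rewrite /Ju.
  by case: (u n) (Su n) => f g; exact: companion_nrm2.
rewrite (mul_adj_adjP hK hH companion_linrel).
split=> [[w [Jw /(hcvg_prodP hK hH)[cvgQ cvg_psi]]]|[u [Su [cvg_psi cvgQ]]]]; last first.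
  exists (Ju u); split=> [n|].
    by exists (u n).1, (u n).2; split=> //; case: (u n) (Su n).
  by apply/(hcvg_prodP hK hH); split=> //; apply/(hcvg0_nrm2P hK); rewrite -ccvgE.
have /choice[u Hu] : forall n, exists fg, S fg /\ w n = (Q fg.1, fg.2 - c%:C%C *: fg.1).
  by move=> n; have [f [g [Sfg w_n]]] := Jw n; exists (f, g).
have Su n : S (u n) by exact: (Hu n).1.
have w_eq : w = Ju u by apply: funext => n; exact: (Hu n).2.
rewrite w_eq in cvgQ cvg_psi; exists u; split=> //; split=> //.
by rewrite ccvgE //; apply/(hcvg0_nrm2P hK).
Qed.

Lemma dom_companion_adjP psi :
  lr_dom (lr_adj ipK ipH J) psi <->
  exists B : R, forall phi phi', lr_shift S c (phi, phi') ->
    `|ipH phi' psi| ^+ 2 <= B%:C%C * ipH phi' phi.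
Proof.
rewrite (dom_adjP hK hH companion_linrel).
split=> [[B bound]|[B bound]]; exists B => _ _ [f [g [Sfg [-> ->]]]].
  rewrite normC_sqnorm companion_nrm2 // -rmorphM lecR.
  by apply: bound; exists f, g.
have Sc : lr_shift S c (f, g - c%:C%C *: f) by exists f, g.
by have := bound _ _ Sc; rewrite normC_sqnorm companion_nrm2 // -rmorphM lecR.
Qed.
End Companion.

Unset Implicit Arguments.
(* Semiboundedness of [S] and [c <= gamma] only guarantee that a representing map
   exists; the argument uses nothing but the representing identity. *)
Theorem theorem3p1 (R : realType)
  (H : lmodType R[i]) (ipH : H -> H -> R[i]) (hH : is_hilbert ipH)
  (K : lmodType R[i]) (ipK : K -> K -> R[i]) (hK : is_hilbert ipK)
  (S : set (H * H)) (hS : linrel S) (gamma : R) (hgamma : semibounded_lb ipH S gamma)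
  (c : R) (hc : c <= gamma) (Q : H -> K) (hQ : representing_map ipH ipK S c Q) :
  let J := companion S c Q in
  [/\ lr_mul J = lr_ran (lr_shift S c) `&` lr_mul (lr_adj ipH ipH S),
      (forall psi' : H,
         lr_mul (lr_adj ipH ipK (lr_adj ipK ipH J)) psi' <->
         exists u : nat -> H * H, (forall n, S (u n)) /\
           hcvg ipH (fun n => (u n).2 - c%:C%C *: (u n).1) psi' /\
           ccvg (fun n => ipH ((u n).2 - c%:C%C *: (u n).1) (u n).1) 0) &
      (forall psi' : H,
         lr_dom (lr_adj ipK ipH J) psi' <->
         exists Cpsi : R, forall phi phi', lr_shift S c (phi, phi') ->
           `|ipH phi' psi'| ^+ 2 <= Cpsi%:C%C * ipH phi' phi)].
Proof.
split.
- exact (mul_companion hH hK hQ).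
- exact (mul_companion_closureP hH hK hS hQ).
- exact (dom_companion_adjP hH hK hS hQ).
Qed.
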